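(* Let $\mathcal C=\mathcal C(I,A,(\rho_i)_{i\in I},(C^a)_{a\in A})$ be a Cartan scheme and $\mathcal R=\mathcal R(\mathcal C,(R^a)_{a\in A})$ a root system of type $\mathcal C$. For $a\in A$ let $(R^a)^{\mathrm{re}}=\{\omega(\alpha_i)\mid \omega\in\mathrm{Hom}(b,a),\ b\in A,\ i\in I\}$. Then $\mathcal R^{\mathrm{re}}=\mathcal R(\mathcal C,((R^a)^{\mathrm{re}})_{a\in A})$ is a root system of type $\mathcal C$, and $\mathcal W(\mathcal R^{\mathrm{re}})=\mathcal W(\mathcal R)$.
   Context: Let $I$ be a nonempty finite set and $\{\alpha_i\mid i\in I\}$ the standard basis of $\mathbb Z^I$; $\mathbb N_0=\{0,1,2,\dots\}$. A generalized Cartan matrix is $C=(c_{ij})_{i,j\in I}\in\mathbb Z^{I\times I}$ with $c_{ii}=2$, $c_{jk}\le0$ for $j\ne k$, and $c_{ij}=0\Rightarrow c_{ji}=0$. A Cartan scheme $\mathcal C=\mathcal C(I,A,(\rho_i)_{i\in I},(C^a)_{a\in A})$ consists of a nonempty set $A$, maps $\rho_i:A\to A$ and generalized Cartan matrices $C^a=(c^a_{jk})_{j,k\in I}$ such that (C1) $\rho_i^2=\mathrm{id}$ and (C2) $c^a_{ij}=c^{\rho_i(a)}_{ij}$ for all $a\in A$, $i,j\in I$. For $i\in I$, $a\in A$ let $\sigma_i^a\in\mathrm{Aut}(\mathbb Z^I)$, $\sigma_i^a(\alpha_j)=\alpha_j-c^a_{ij}\alpha_i$. The Weyl groupoid $\mathcal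 W(\mathcal C)$ has object set $A$; $\mathrm{Hom}(a,b)$ consists of the triples $(b,f,a)$ with $f=\sigma_{i_n}^{a_{n-1}}\cdots\sigma_{i_1}^{a_0}$, where $n\ge0$, $i_1,\dots,i_n\in I$, $a_0=a$, $a_k=\rho_{i_k}(a_{k-1})$, $a_n=b$ (one writes $\omega(v)=f(v)$ for $\omega=(b,f,a)$); composition is multiplication in $\mathrm{Aut}(\mathbb Z^I)$. A root system of type $\mathcal C$ is a family $\mathcal R=\mathcal R(\mathcal C,(R^a)_{a\in A})$ of subsets $R^a\subset\mathbb Z^I$ such that, writing $R^a_+=R^a\cap\mathbb N_0^I$ and $m^a_{i,j}=|R^a\cap(\mathbb N_0\alpha_i+\mathbb N_0\alpha_j)|$, for all $a\in A$, $i,j\in I$: (R1) $R^a=R^a_+\cup(-R^a_+)$; (R2) $R^a\cap\mathbb Z\alpha_i=\{\alpha_i,-\alpha_i\}$; (R3) $\sigma_i^a(R^a)=R^{\rho_i(a)}$; (R4) if $i\neq j$ and $m^a_{i,j}$ is finite then $(\rho_i\rho_j)^{m^a_{i,j}}(a)=a$. The Weyl groupoid $\mathcal W(\mathcal R)$ of a root system of type $\mathcal C$ is defined to be $\mathcal W(\mathcal C)$. *)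

From HB Require Import structures.
From mathcomp Require Import all_boot all_order all_algebra.
Set Implicit Arguments. Unset Strict Implicit. Unset Printing Implicit Defensive.
Import Order.TTheory GRing.Theory Num.Theory.
Local Open Scope ring_scope.

Notation vec I := {ffun I -> int}.

Section CartanDefs.
Variables (I : finType) (A : Type).
Local Notation vec := (vec I).

Definition alpha (i : I) : vec := [ffun j => ((i == j) : nat)%:Z].

Definition scalev (k : int) (v : vec) : vec := [ffun x => k * v x].

Definition nonneg (v : vec) : Prop := forall k, 0 <= v k.

Definition gen_cartan_matrix (c : I -> I -> int) : Prop :=
  (forall i, c i i = 2) /\
  (forall j k, j != k -> c j k <= 0) /\
  (forall i j, c i j = 0 -> c j i = 0).

Definition cartan_scheme (rho : I -> A -> A) (C : A -> I -> I -> int) : Prop :=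
  (0 < #|I|)%N /\ inhabited A /\
  (forall a, gen_cartan_matrix (C a)) /\
  (forall i a, rho i (rho i a) = a) /\
  (forall a i j, C a i j = C (rho i a) i j).

(* sigma_i^a, the linear map with sigma_i^a(alpha_j) = alpha_j - c^a_ij alpha_i *)
Definition sigma (C : A -> I -> I -> int) (a : A) (i : I) (v : vec) : vec :=
  v - scalev (\sum_j C a i j * v j) (alpha i).

Fixpoint wend (rho : I -> A -> A) (a : A) (w : seq I) : A :=
  if w is i :: w' then wend rho (rho i a) w' else a.

(* the map sigma_{i_n}^{a_{n-1}} ... sigma_{i_1}^{a_0} *)
Fixpoint wmap (rho : I -> A -> A) (C : A -> I -> I -> int) (a : A) (w : seq I)
  (v : vec) : vec :=
  if w is i :: w' then wmap rho C (rho i a) w' (sigma C a i v) else v.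

Definition weyl_hom (rho : I -> A -> A) (C : A -> I -> I -> int) (a b : A)
  (f : vec -> vec) : Prop :=
  exists w : seq I, wend rho a w = b /\ forall v, f v = wmap rho C a w v.

Definition has_card (S : vec -> Prop) (n : nat) : Prop :=
  exists s : seq vec, uniq s /\ size s = n /\ forall v, S v <-> v \in s.

Definition root_system (rho : I -> A -> A) (C : A -> I -> I -> int)
  (R : A -> vec -> Prop) : Prop :=
  (forall a v, R a v <-> ((R a v /\ nonneg v) \/
                          (exists u, R a u /\ nonneg u /\ v = - u))) /\
  (forall a i v, (R a v /\ exists k : int, v = scalev k (alpha i)) <->
                 (v = alpha i \/ v = - alpha i)) /\
  (forall a i v, R (rho i a) v <-> exists u, R a u /\ v = sigma C a i u) /\
  (forall a i j, i != j -> forall m : nat,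
     has_card (fun v => R a v /\ exists p q : nat,
                 v = scalev (p%:Z) (alpha i) + scalev (q%:Z) (alpha j)) m ->
     iter m (fun x => rho i (rho j x)) a = a).

(* Weyl groupoid of a root system of type C: by definition W(C) *)
Definition rs_weyl_hom (rho : I -> A -> A) (C : A -> I -> I -> int)
  (R : A -> vec -> Prop) : A -> A -> (vec -> vec) -> Prop :=
  weyl_hom rho C.

Definition real_roots (rho : I -> A -> A) (C : A -> I -> I -> int) (a : A)
  (v : vec) : Prop :=
  exists (b : A) (f : vec -> vec) (i : I), weyl_hom rho C b a f /\ v = f (alpha i).

End CartanDefs.

From HB Require Import structures.
From mathcomp Require Import all_boot all_order all_algebra.
From mathcomp Require Import ring.
From Stdlib Require Import Classical.
Set Implicit Arguments. Unset Strict Implicit. Unset Printing Implicit Defensive.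
Import Order.TTheory GRing.Theory Num.Theory.
Local Open Scope ring_scope.

(* Axioms (R1)-(R3) pass to the real roots because they are the orbits of the
   simple roots under the Weyl groupoid, which is closed under each sigma_i and
   under inversion.  The content is (R4), which needs that every root in the
   cone N0 alpha_i + N0 alpha_j is real as soon as the real roots there are
   finitely many.  If a positive root v in the cone were not real, the
   alternating reflections sigma_i, sigma_j, sigma_i, ... would never send it
   to a simple root, so all its images stay positive.  Pulling back the simple
   roots along the same alternating words then gives real roots beta_k, which
   must all be positive (otherwise v would be negative) and are pairwise
   distinct: infinitely many real roots in the cone. *)

Section Reflections.
Variables (I : finType) (A : Type) (C : A -> I -> I -> int).
Implicit Types (a : A) (l m : I) (u v : vec I).

Lemma alpha_id l : alpha l l = 1.
Proof. by rewrite ffunE eqxx. Qed.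

Lemma alpha_ne l m : l != m -> alpha l m = 0.
Proof. by rewrite ffunE => /negbTE ->. Qed.

Lemma nonneg_alpha l : nonneg (alpha l).
Proof. by move=> m; rewrite ffunE; case: (l == m). Qed.

Lemma nonneg_antisym v : nonneg v -> nonneg (- v) -> v = 0.
Proof.
move=> v_ge0 Nv_ge0; apply/ffunP=> m; have := Nv_ge0 m.
by rewrite !ffunE oppr_ge0 => v_le0; apply/eqP; rewrite eq_le v_le0 v_ge0.
Qed.

Lemma sigma_ne a l v m : l != m -> sigma C a l v m = v m.
Proof. by move=> lm; rewrite !ffunE /= (negbTE lm) mulr0 subr0. Qed.

Lemma sigmaD a l u v : sigma C a l (u + v) = sigma C a l u + sigma C a l v.
Proof.
apply/ffunP=> m; rewrite /sigma !ffunE.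
have -> : \sum_j C a l j * (u + v) j = \sum_j C a l j * u j + \sum_j C a l j * v j.
  by rewrite -big_split; apply: eq_bigr => k _; rewrite ffunE mulrDr.
ring.
Qed.

Lemma sigmaN a l v : sigma C a l (- v) = - sigma C a l v.
Proof.
apply/ffunP=> m; rewrite /sigma !ffunE.
have -> : \sum_j C a l j * (- v) j = - \sum_j C a l j * v j.
  by rewrite -sumrN; apply: eq_bigr => k _; rewrite ffunE mulrN.
ring.
Qed.

Lemma sigmaZ a l k v : sigma C a l (scalev k v) = scalev k (sigma C a l v).
Proof.
apply/ffunP=> m; rewrite /sigma !ffunE.
have -> : \sum_j C a l j * scalev k v j = k * \sum_j C a l j * v j.
  by rewrite mulr_sumr; apply: eq_bigr => x _; rewrite ffunE; ring.
ring.
Qed.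

Lemma sigma_alpha a l : C a l l = 2 -> sigma C a l (alpha l) = - alpha l.
Proof.
move=> Cll; have sum_alpha : \sum_j C a l j * alpha l j = C a l l.
  rewrite (bigD1 l) //= big1 ?addr0; first by rewrite alpha_id mulr1.
  by move=> k kl; rewrite alpha_ne 1?eq_sym // mulr0.
by apply/ffunP=> m; rewrite /sigma sum_alpha Cll !ffunE; ring.
Qed.

Lemma sigmaK a l : C a l l = 2 -> involutive (sigma C a l).
Proof.
move=> Cll v; set s := \sum_j C a l j * v j.
have -> : sigma C a l v = v + scalev (- s) (alpha l).
  by apply/ffunP=> m; rewrite !ffunE; ring.
rewrite sigmaD sigmaZ sigma_alpha //.
by apply/ffunP=> m; rewrite /sigma !ffunE -/s; ring.
Qed.

Lemma sigma_ext a b l v :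
  (forall j, C a l j = C b l j) -> sigma C a l v = sigma C b l v.
Proof.
by move=> eqC; congr (_ - scalev _ _); apply: eq_bigr => k _; rewrite eqC.
Qed.

End Reflections.

Definition supported (I : finType) (P : pred I) (v : vec I) :=
  forall m, ~~ P m -> v m = 0.

(* N0 alpha_i + N0 alpha_j, in the form used by (R4) so that the two are convertible. *)
Definition cone (I : finType) (i j : I) (v : vec I) :=
  exists p q : nat, v = scalev p%:Z (alpha i) + scalev q%:Z (alpha j).

Section Cone.
Variables (I : finType) (i j : I).
Hypothesis neq_ij : i != j.

Lemma supported2E v : supported (pred2 i j) v ->
  v = scalev (v i) (alpha i) + scalev (v j) (alpha j).
Proof.
move=> v_supp; apply/ffunP=> m; rewrite !ffunE.
have [<-|im] := eqVneq i m.
  by rewrite ?eqxx [j == i]eq_sym (negbTE neq_ij) /= mulr0 addr0 mulr1.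
have [<-|jm] := eqVneq j m; first by rewrite mulr0 mulr1 add0r.
by rewrite !mulr0 addr0 v_supp //= !(eq_sym m) (negbTE im) (negbTE jm).
Qed.

Lemma coneP v : cone i j v <-> nonneg v /\ supported (pred2 i j) v.
Proof.
split=> [[p [q ->]]|[v_ge0 v_supp]].
  split=> m; rewrite !ffunE; first by rewrite addr_ge0 // mulr_ge0.
  by case/norP; rewrite !(eq_sym m) => /negbTE-> /negbTE->; rewrite !mulr0 addr0.
by exists `|v i|%N, `|v j|%N; rewrite !gez0_abs //; apply: supported2E.
Qed.

End Cone.

Section WeylGroupoid.
Variables (I : finType) (A : Type) (rho : I -> A -> A) (C : A -> I -> I -> int).
Hypothesis rhoK : forall i, involutive (rho i).
Hypothesis C_rho : forall a i j, C a i j = C (rho i a) i j.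
Hypothesis Cii : forall a i, C a i i = 2.
Implicit Types (a b : A) (i j l : I) (w : seq I) (u v : vec I).

Local Notation wmap := (wmap rho C).
Local Notation wend := (wend rho).

Lemma sigma_rho a l v : sigma C (rho l a) l v = sigma C a l v.
Proof. by apply: sigma_ext => j; rewrite -C_rho. Qed.

Lemma wmapD a w u v : wmap a w (u + v) = wmap a w u + wmap a w v.
Proof. by elim: w a u v => [|l w IH] a u v //=; rewrite sigmaD IH. Qed.

Lemma wmapN a w v : wmap a w (- v) = - wmap a w v.
Proof. by elim: w a v => [|l w IH] a v //=; rewrite sigmaN IH. Qed.

Lemma wmapZ a w k v : wmap a w (scalev k v) = scalev k (wmap a w v).
Proof. by elim: w a v => [|l w IH] a v //=; rewrite sigmaZ IH. Qed.

Lemma wend_cat a w1 w2 : wend a (w1 ++ w2) = wend (wend a w1) w2.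
Proof. by elim: w1 a => [|l w IH] a //=. Qed.

Lemma wmap_cat a w1 w2 v :
  wmap a (w1 ++ w2) v = wmap (wend a w1) w2 (wmap a w1 v).
Proof. by elim: w1 a v => [|l w IH] a v //=. Qed.

Lemma wend_revK a w : wend (wend a w) (rev w) = a.
Proof. by elim: w a => [|l w IH] a //=; rewrite rev_cons -cats1 wend_cat IH /= rhoK. Qed.

Lemma wmap_revK a w : cancel (wmap a w) (wmap (wend a w) (rev w)).
Proof.
elim: w a => [|l w IH] a v //=.
by rewrite rev_cons -cats1 wmap_cat IH wend_revK /= sigma_rho sigmaK.
Qed.

Lemma wmap_revKV a w : cancel (wmap (wend a w) (rev w)) (wmap a w).
Proof. by have := wmap_revK (wend a w) (rev w); rewrite revK wend_revK. Qed.

Lemma supported_wmap (P : pred I) a w v :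
  all P w -> supported P v -> supported P (wmap a w v).
Proof.
elim: w a v => [|l w IH] a v //= /andP[Pl Pw] v_supp; apply: IH => // m Pm.
by rewrite sigma_ne ?v_supp //; apply: contraNneq Pm => <-.
Qed.

Section RootSystem.
Variable R : A -> vec I -> Prop.
Hypothesis R1 : forall a v, R a v <->
  ((R a v /\ nonneg v) \/ (exists u, R a u /\ nonneg u /\ v = - u)).
Hypothesis R2 : forall a i v, (R a v /\ exists k : int, v = scalev k (alpha i)) <->
  (v = alpha i \/ v = - alpha i).
Hypothesis R3 : forall a i v, R (rho i a) v <-> exists u, R a u /\ v = sigma C a i u.

Lemma root_alpha a l : R a (alpha l).
Proof. by have /(R2 a l)[] : alpha l = alpha l \/ alpha l = - alpha l by left. Qed.

Lemma root_neq0 a v (l : I) : R a v -> v <> 0.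
Proof.
move=> Rv v0; have [] : 0 = alpha l \/ 0 = - alpha l.
  apply/(R2 a l); split; first by rewrite -v0.
  by exists 0; apply/ffunP=> m; rewrite !ffunE mul0r.
- by move/ffunP/(_ l); rewrite alpha_id ffunE.
- by move/ffunP/(_ l); rewrite !ffunE eqxx.
Qed.

Lemma root_sign a v : R a v -> nonneg v \/ nonneg (- v).
Proof.
case/R1=> [[_ v_ge0]|[u [_ [u_ge0 ->]]]]; [by left | right].
by move=> k; rewrite opprK.
Qed.

Lemma rootN a v : R a v -> R a (- v).
Proof.
move=> Rv; have [[_ v_ge0]|[u [Ru [_ ->]]]] := iffLR (R1 a v) Rv; last by rewrite opprK.
by apply/R1; right; exists v.
Qed.

Lemma root_wmap a w v : R a v -> R (wend a w) (wmap a w v).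
Proof. by elim: w a v => [|l w IH] a v //= Rv; apply: IH; apply/R3; exists v. Qed.

(* A positive root other than alpha_l stays positive under sigma_l: its image
   differs from it only in the coordinate l, so if it were negative the root
   would be a multiple of alpha_l, excluded by (R2). *)
Lemma sigma_pos_root b l v :
  R b v -> nonneg v -> v <> alpha l -> nonneg (sigma C b l v).
Proof.
move=> Rv v_ge0 v_neq.
have Rs : R (rho l b) (sigma C b l v) by apply/R3; exists v.
case: (root_sign Rs) => // Ns_ge0.
have v_l : v = scalev (v l) (alpha l).
  apply/ffunP=> m; rewrite ffunE; have [<-|lm] := eqVneq l m.
    by rewrite alpha_id mulr1.
  rewrite alpha_ne // mulr0; apply/eqP; rewrite eq_le v_ge0 andbT.
  by have := Ns_ge0 m; rewrite ffunE sigma_ne // oppr_ge0.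
have [//|v_Nalpha] : v = alpha l \/ v = - alpha l.
  by apply/(R2 b l); split=> //; exists (v l).
by have := v_ge0 l; rewrite v_Nalpha !ffunE eqxx.
Qed.

Lemma sigma_neg_root b l v :
  R b v -> nonneg (- v) -> v <> - alpha l -> nonneg (- sigma C b l v).
Proof.
move=> Rv Nv_ge0 v_neq; rewrite -sigmaN; apply: sigma_pos_root => //; first exact: rootN.
by move=> Nv; apply: v_neq; rewrite -Nv opprK.
Qed.

Local Notation real := (real_roots rho C).

Lemma real_rootsP a v :
  real a v <-> exists b w l, wend b w = a /\ v = wmap b w (alpha l).
Proof.
split=> [[b [f [l [[w [<- f_w]] ->]]]]|[b [w [l [<- ->]]]]].
  by exists b, w, l; rewrite f_w.
by exists b, (wmap b w), l; split=> //; exists w.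
Qed.

Lemma real_roots_wmap b w l : real (wend b w) (wmap b w (alpha l)).
Proof. by apply/real_rootsP; exists b, w, l. Qed.

Lemma real_roots_alpha a l : real a (alpha l).
Proof. exact: (real_roots_wmap a [::]). Qed.

Lemma root_real a v : real a v -> R a v.
Proof. by case/real_rootsP=> [b [w [l [<- ->]]]]; apply/root_wmap/root_alpha. Qed.

Lemma real_rootsN a v : real a v -> real a (- v).
Proof.
case/real_rootsP=> [b [w [l [<- ->]]]].
have := real_roots_wmap (rho l b) (l :: w) l.
by rewrite /= rhoK sigma_rho sigma_alpha // wmapN.
Qed.

Lemma real_roots_R1 a v : real a v <->
  ((real a v /\ nonneg v) \/ (exists u, real a u /\ nonneg u /\ v = - u)).
Proof.
split=> [rv|[[]|[u [ru [_ ->]]]] //]; last exact: real_rootsN.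
case: (root_sign (root_real rv)) => v_ge0; [by left | right].
by exists (- v); rewrite opprK; split=> //; apply: real_rootsN.
Qed.

Lemma real_roots_R2 a i v : (real a v /\ exists k : int, v = scalev k (alpha i)) <->
  (v = alpha i \/ v = - alpha i).
Proof.
split=> [[rv v_i]|[->|->]]; first by apply/(R2 a i); split=> //; apply: root_real.
  split; first exact: real_roots_alpha.
  by exists 1; apply/ffunP=> m; rewrite !ffunE mul1r.
split; first exact/real_rootsN/real_roots_alpha.
by exists (-1); apply/ffunP=> m; rewrite !ffunE mulN1r.
Qed.

Lemma real_roots_R3 a i v : real (rho i a) v <-> exists u, real a u /\ v = sigma C a i u.
Proof.
split=> [/real_rootsP[b [w [l [wa ->]]]]|[u [/real_rootsP[b [w [l [wa ->]]]] ->]]].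
  exists (wmap b (w ++ [:: i]) (alpha l)); split.
    by have := real_roots_wmap b (w ++ [:: i]) l; rewrite wend_cat wa /= rhoK.
  by rewrite wmap_cat /= wa sigma_rho sigmaK.
by have := real_roots_wmap b (w ++ [:: i]) l; rewrite wend_cat wa wmap_cat wa.
Qed.

Lemma wmap_cone_nonpos b w i j x :
  nonneg (- wmap b w (alpha i)) -> nonneg (- wmap b w (alpha j)) ->
  cone i j x -> nonneg (- wmap b w x).
Proof.
move=> Ni_ge0 Nj_ge0 [p [q ->]] m; have := Ni_ge0 m; have := Nj_ge0 m.
rewrite wmapD !wmapZ opprD !ffunE -!mulrN => Nj_m Ni_m.
by rewrite addr_ge0 // mulr_ge0.
Qed.

Section AlternatingWords.
Variables (a : A) (i j : I).
Hypothesis neq_ij : i != j.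

Definition alt_letter k := if odd k then j else i.
Definition alt_word k := mkseq alt_letter k.

Local Notation endpt k := (wend a (alt_word k)).
Local Notation f k := (wmap a (alt_word k)).
Local Notation g k := (wmap (endpt k) (rev (alt_word k))).

(* beta k is the real root that f k sends to the simple root alpha (alt_letter k). *)
Definition beta k := g k (alpha (alt_letter k)).

Lemma alt_word_pred2 k : all (pred2 i j) (alt_word k).
Proof.
by rewrite all_map; apply/allP=> n _ /=; rewrite /alt_letter; case: odd; rewrite eqxx ?orbT.
Qed.

Lemma alt_wmapS k v : f k.+1 v = sigma C (endpt k) (alt_letter k) (f k v).
Proof. by rewrite /alt_word mkseqS -cats1 wmap_cat. Qed.

Lemma alt_wmap_beta k : f k (beta k) = alpha (alt_letter k).
Proof. exact: wmap_revKV. Qed.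

Lemma alt_wmapS_beta k : f k.+1 (beta k) = - alpha (alt_letter k).
Proof. by rewrite alt_wmapS alt_wmap_beta sigma_alpha. Qed.

Lemma real_roots_beta k : real a (beta k).
Proof.
by have := real_roots_wmap (endpt k) (rev (alt_word k)) (alt_letter k); rewrite wend_revK.
Qed.

Lemma supported_beta k : supported (pred2 i j) (beta k).
Proof.
apply: supported_wmap; first by rewrite all_rev alt_word_pred2.
by move=> m /norP[im jm]; rewrite /alt_letter; case: odd; rewrite alpha_ne // eq_sym.
Qed.

Section NonRealRoot.
Variable v : vec I.
Hypotheses (Rv : R a v) (v_cone : cone i j v) (v_nreal : ~ real a v).

Lemma alt_wmap_nonneg k : nonneg (f k v).
Proof.
elim: k => [|k IH]; first by have [] := (coneP neq_ij v).1 v_cone.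
rewrite alt_wmapS; apply: sigma_pos_root => //; first exact: root_wmap.
move=> fv; apply: v_nreal; rewrite -(wmap_revK a (alt_word k) v) fv.
exact: real_roots_beta.
Qed.

(* If beta k.+1 were negative, g k.+1 would send alpha_i and alpha_j to negative
   vectors (one of the two images is - beta k), hence also the positive vector
   f k.+1 v, whose image is v. *)
Lemma beta_nonneg k : nonneg (beta k).
Proof.
elim: k => [|k IH]; first exact: nonneg_alpha.
case: (root_sign (root_real (real_roots_beta k.+1))) => // Nbeta_ge0; exfalso.
have g_prev : - g k.+1 (alpha (alt_letter k)) = beta k.
  by rewrite -wmapN -alt_wmapS_beta wmap_revK.
have [Ni_ge0 Nj_ge0] : nonneg (- g k.+1 (alpha i)) /\ nonneg (- g k.+1 (alpha j)).
  move: Nbeta_ge0 IH; rewrite -g_prev /beta /alt_letter /=.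
  by case: odd => /= ? ?; split.
have f_cone : cone i j (f k.+1 v).
  apply/coneP => //; split; first exact: alt_wmap_nonneg.
  apply: supported_wmap; first exact: alt_word_pred2.
  by have [] := (coneP neq_ij v).1 v_cone.
have := wmap_cone_nonpos Ni_ge0 Nj_ge0 f_cone; rewrite wmap_revK => Nv_ge0.
exact: (root_neq0 i Rv (nonneg_antisym (alt_wmap_nonneg 0) Nv_ge0)).
Qed.

End NonRealRoot.

(* As k grows past s, the images f k (beta s) stay negative: they can only turn
   positive by passing through - alpha (alt_letter k) = - f k (beta k), which
   would force beta s = - beta k. *)
Lemma alt_wmap_beta_nonpos (beta_ge0 : forall k, nonneg (beta k)) s k :
  (s < k)%N -> nonneg (- f k (beta s)).
Proof.
elim: k => // k IH; rewrite ltnS leq_eqVlt => /predU1P[<-|lt_sk].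
  by rewrite alt_wmapS_beta opprK; apply: nonneg_alpha.
rewrite alt_wmapS; apply: sigma_neg_root; first exact/root_wmap/root_real/real_roots_beta.
  exact: IH.
rewrite -alt_wmap_beta -wmapN => /(can_inj (wmap_revK _ _)) beta_sk.
apply: (root_neq0 i (root_real (real_roots_beta s))).
by apply: nonneg_antisym (beta_ge0 s) _; rewrite beta_sk opprK.
Qed.

Lemma beta_inj (beta_ge0 : forall k, nonneg (beta k)) : injective beta.
Proof.
suff lt_neq s k : (s < k)%N -> beta s <> beta k.
  move=> s k eq_sk; have [lt_sk|lt_ks|//] := ltngtP s k.
  - by case: (lt_neq _ _ lt_sk eq_sk).
  - by case: (lt_neq _ _ lt_ks (esym eq_sk)).
move=> lt_sk eq_sk; have := alt_wmap_beta_nonpos beta_ge0 lt_sk (alt_letter k).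
by rewrite eq_sk alt_wmap_beta !ffunE eqxx.
Qed.

Lemma cone_root_real m v :
  has_card (fun v => real a v /\ cone i j v) m -> R a v -> cone i j v -> real a v.
Proof.
move=> [s [s_uniq [s_size s_cone]]] Rv v_cone; apply: NNPP => v_nreal.
have beta_ge0 := beta_nonneg Rv v_cone v_nreal.
have betas_in_s : {subset map beta (iota 0 m.+1) <= s}.
  move=> x /mapP[k _ ->]; apply/s_cone; split; first exact: real_roots_beta.
  by apply/coneP => //; split; [apply: beta_ge0 | apply: supported_beta].
have := uniq_leq_size _ betas_in_s.
rewrite (map_inj_uniq (beta_inj beta_ge0)) iota_uniq size_map size_iota s_size.
by rewrite ltnn => /(_ isT).
Qed.

End AlternatingWords.
End RootSystem.
End WeylGroupoid.

Lemma has_card_ext (I : finType) (P Q : vec I -> Prop) n :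
  (forall v, P v <-> Q v) -> has_card P n -> has_card Q n.
Proof.
by move=> PQ [s [s_uniq [s_size s_P]]]; exists s; do 2!split=> //; move=> v; rewrite -PQ.
Qed.

Theorem proposition2p9 (I : finType) (A : Type) (rho : I -> A -> A)
  (C : A -> I -> I -> int) (R : A -> vec I -> Prop) :
  cartan_scheme rho C -> root_system rho C R ->
  root_system rho C (real_roots rho C) /\
  rs_weyl_hom rho C (real_roots rho C) = rs_weyl_hom rho C R.
Proof.
move=> [_ [_ [gcm [rhoK C_rho]]]] [R1 [R2 [R3 R4]]].
have Cii a i : C a i i = 2 by case: (gcm a).
split=> //; split; first exact: (real_roots_R1 rhoK C_rho Cii R1 R2 R3).
split; first exact: (real_roots_R2 rhoK C_rho Cii R2 R3).
split; first exact: (real_roots_R3 rhoK C_rho Cii).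
move=> a i j neq_ij m real_card; apply: (R4 _ _ _ neq_ij); apply: has_card_ext (real_card).
move=> v; split=> [[/(root_real R2 R3) Rv v_cone]|[Rv v_cone]] //.
by split=> //; apply: (cone_root_real rhoK C_rho Cii R1 R2 R3 neq_ij real_card).
Qed.
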